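(* Let $\mu$ be an integer with $h/2<\mu\le h$ and $p\in\mathcal P$. Then $D_\mu(p)=\bigcup_{\Gamma\in\mathcal C(\Gamma_\mu(p))}\max(\Gamma)\supseteq\bigcup_{\Gamma\in\mathcal A(\Gamma_\mu(p))}\max(\Gamma)\supseteq \mathrm I(\Gamma_\mu(p))$ and $|D_\mu(p)|=\sum_{\Gamma\in\mathcal C(\Gamma_\mu(p))}|\max(\Gamma)|\ge|\mathcal A(\Gamma_\mu(p))|\ge|\mathrm I(\Gamma_\mu(p))|$.
   Context: Let $n,h\ge2$, $N=\{1,\dots,n\}$, $H=\{1,\dots,h\}$, $\mathcal P$ the set of $h$-tuples of linear orders on $N$; $x>_{p_i}y$ means $x\neq y$ and $p_i$ ranks $x$ above $y$. Write $x>^p_\mu y$ if $|\{i: x>_{p_i}y\}|\ge\mu$; $D_\mu(p)=\{x\in N: \forall y,\ |\{i: y>_{p_i}x\}|<\mu\}$. The $\mu$-majority graph is the directed graph $\Gamma_\mu(p)=(N,\{(x,y): x>^p_\mu y\})$. For a directed graph $\Gamma=(V,A)$ (with $A\subseteq\{(x,y)\in V^2:x\ne y\}$): $\max(\Gamma)$ is the set of $x\in V$ with no $y$ such that $(y,x)\in A$; $\mathrm I(\Gamma)$ is the set of vertices $x$ with $(x,y),(y,x)\notin A$ for all $y\ne x$; connected components are those of the underlying undirected graph; a cycle is a subgraph on distinct vertices $x_1,\dots,x_l$ ($l\ge2$) with arcs exactly $(x_j,x_{j+1})$, $x_{l+1}=x_1$; $\Gamma$ is acyclic if it has no cycle as a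 subgraph. $\mathcal C(\Gamma_\mu(p))$ is the set of connected components of $\Gamma_\mu(p)$ and $\mathcal A(\Gamma_\mu(p))$ the set of those that are acyclic. *)

From mathcomp Require Import all_boot all_order.
From mathcomp Require Import fingraph fingroup perm.
Set Implicit Arguments. Unset Strict Implicit. Unset Printing Implicit Defensive.

(* A directed graph is given by a vertex set S : {set V} and an arc relation
   A : rel V (only arcs between vertices of S count). *)
Section Digraph.
Variable V : finType.
Implicit Types (S C : {set V}) (A : rel V).

Definition gmax S A : {set V} := [set x in S | [forall y in S, ~~ A y x]].

Definition gisolated S A : {set V} :=
  [set x in S | [forall y in S, (y != x) ==> (~~ A x y && ~~ A y x)]].

Definition uadj A : rel V := fun x y => A x y || A y x.

Definition gcomponents A : {set {set V}} :=
  [set [set y | connect (uadj A) x y] | x : V].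

(* Since the vertices are
   distinct, l <= #|V|, so quantifying over lengths l <= #|V| loses nothing. *)
Definition has_cycle S A : bool :=
  [exists l : 'I_(#|V|).+1, [exists t : l.-tuple V,
     [&& 2 <= l, uniq t, all (fun x => x \in S) t & path.cycle A t]]].

Definition acyclic S A : bool := ~~ has_cycle S A.

Definition acyclic_components A : {set {set V}} :=
  [set C in gcomponents A | acyclic C A].

End Digraph.

(* Alternatives N = 'I_n, individuals H = 'I_h.  A linear order on 'I_n is
   encoded by a permutation r giving positions: x is ranked above y iff
   r x < r y (position 0 = top). *)
Definition profile (n h : nat) := 'I_h -> {perm 'I_n}.

Definition above n h (p : profile n h) (i : 'I_h) (x y : 'I_n) : bool :=
  (x != y) && (p i x < p i y).

Definition support n h (p : profile n h) (x y : 'I_n) : nat :=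
  #|[set i | above p i x y]|.

Definition mu_beats n h (p : profile n h) (mu : nat) (x y : 'I_n) : bool :=
  mu <= support p x y.

Definition Dmu n h (p : profile n h) (mu : nat) : {set 'I_n} :=
  [set x | [forall y, support p y x < mu]].

(* arc relation of the mu-majority graph Gamma_mu(p) = (N, {(x,y) : x >^p_mu y}),
   restricted to x <> y as required of directed graphs *)
Definition maj_arc n h (p : profile n h) (mu : nat) : rel 'I_n :=
  fun x y => (x != y) && mu_beats p mu x y.

From Pilot Require Import Defs.
From mathcomp Require Import all_boot all_order fingroup perm.
From mathcomp Require Import zify.
Set Implicit Arguments. Unset Strict Implicit. Unset Printing Implicit Defensive.

(** For [mu > 0] the set [D_mu(p)] consists exactly of the
    sources (vertices without in-arcs) of the majority graph.  Every arc stays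
    inside a connected component, so the sources of the graph are the disjoint
    union of the sources of its components.  A nonempty acyclic component has a
    source, since walking backwards along arcs must eventually revisit a vertex
    and close a cycle; and an isolated vertex forms an acyclic component on its
    own, of which it is the source. *)

Section Digraph.
Variable V : finType.
Variable A : rel V.
Hypothesis A_irr : irreflexive A.

Definition gcomponent x : {set V} := [set y | connect (uadj A) x y].

Lemma gcomponent_refl x : x \in gcomponent x.
Proof. by rewrite inE connect0. Qed.

Lemma gcomponent_in_gcomponents x : gcomponent x \in gcomponents A.
Proof. exact: imset_f. Qed.

Lemma gcomponentsP C : reflect (exists x, C = gcomponent x) (C \in gcomponents A).
Proof. by apply: (iffP imsetP) => [[x _ ->] | [x ->]]; exists x. Qed.

Lemma uadj_sym : symmetric (uadj A).
Proof. by move=> x y; rewrite /uadj orbC. Qed.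

Lemma gcomponent_arc_closed C x y :
  C \in gcomponents A -> x \in C -> A y x -> y \in C.
Proof.
case/gcomponentsP=> c ->; rewrite !inE => cx Ayx.
by apply: connect_trans cx (connect1 _); rewrite /uadj Ayx orbT.
Qed.

Lemma gmax_gcomponent C : C \in gcomponents A -> gmax C A = C :&: gmax setT A.
Proof.
move=> Ccomp; apply/setP=> x; rewrite !inE /=.
have [xC /= | //] := boolP (x \in C).
apply/forall_inP/forall_inP => [srcC y _ | src y _]; last by rewrite src ?inE.
by apply/negP=> Ayx; move: (srcC y (gcomponent_arc_closed Ccomp xC Ayx)); rewrite Ayx.
Qed.

Lemma partition_gcomponents : partition (gcomponents A) setT.
Proof.
apply/and3P; split.
- apply/eqP/setP=> x; rewrite inE; apply/bigcupP.
  by exists (gcomponent x); rewrite ?gcomponent_in_gcomponents ?gcomponent_refl.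
- apply/trivIsetP=> _ _ /gcomponentsP[c ->] /gcomponentsP[d ->] cd.
  rewrite -setI_eq0; apply: contraR cd => /set0Pn[z]; rewrite !inE => /andP[cz dz].
  have csym := sym_connect_sym uadj_sym.
  by apply/eqP/setP=> w; rewrite !inE (same_connect csym cz) (same_connect csym dz).
- by apply/negP=> /gcomponentsP[x] /setP/(_ x); rewrite gcomponent_refl inE.
Qed.

Lemma bigcup_gmax_gcomponents :
  \bigcup_(C in gcomponents A) gmax C A = gmax setT A.
Proof.
apply/setP=> x; apply/bigcupP/idP => [[C Ccomp] | src].
  by rewrite gmax_gcomponent // inE => /andP[].
exists (gcomponent x); first exact: gcomponent_in_gcomponents.
by rewrite gmax_gcomponent ?gcomponent_in_gcomponents // inE gcomponent_refl.
Qed.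

Lemma card_gmax_gcomponents :
  #|gmax setT A| = \sum_(C in gcomponents A) #|gmax C A|.
Proof.
rewrite -sum1_card (eq_bigl (fun x => (x \in setT) && (x \in gmax setT A))) => [|x].
  rewrite (set_partition_big_cond _ partition_gcomponents).
  apply: eq_bigr => C Ccomp; rewrite (gmax_gcomponent Ccomp) -sum1_card.
  by apply: eq_bigl => x; rewrite !inE.
by rewrite in_setT.
Qed.

Lemma uniq_size_le_card (s : seq V) : uniq s -> size s <= #|V|.
Proof. by move/card_uniqP <-; apply: max_card. Qed.

Lemma has_cycle_back_arc (S : {set V}) x s y :
  uniq (x :: s) -> all [in S] (x :: s) -> path A x s ->
  A y x -> y \in x :: s -> has_cycle S A.
Proof.
move=> us sS pA Ayx y_in; case/splitPl: y_in us sS pA => s1 s2 def_y.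
rewrite -cat_cons cat_uniq all_cat cat_path => /and3P[us1 _ _] /andP[sS1 _] /andP[pA1 _].
have s1_gt0 : 0 < size s1.
  by case: s1 def_y {us1 sS1 pA1} => // def_y; move: Ayx; rewrite -def_y A_irr.
have size_s1 : size (x :: s1) < (#|V|).+1 by rewrite ltnS uniq_size_le_card.
apply/existsP; exists (Ordinal size_s1); apply/existsP; exists (in_tuple (x :: s1)).
by apply/and4P; split=> //; rewrite /= rcons_path pA1 def_y Ayx.
Qed.

Lemma has_cycle_of_preds (S : {set V}) x :
  (forall y, y \in S -> exists2 z, z \in S & A z y) -> x \in S -> has_cycle S A.
Proof.
move=> preds xS.
suff walk k s y : #|V| - size (y :: s) < k ->
    uniq (y :: s) -> all [in S] (y :: s) -> path A y s -> has_cycle S A.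
  by apply: (walk (#|V|).+1 [::] x); rewrite //= ?xS ?ltnS ?leq_subr.
elim: k s y => [|k IH] s y // bound us sS pA.
have [z zS Azy] := preds y (andP sS).1.
have [zin | zout] := boolP (z \in y :: s); first exact: has_cycle_back_arc Azy zin.
have uzs : uniq (z :: y :: s) by rewrite /= zout.
apply: (IH (y :: s) z) => //=.
- by have := uniq_size_le_card uzs; move: bound => /=; lia.
- exact/andP.
- by rewrite Azy.
Qed.

Lemma acyclic_gmax_neq0 (S : {set V}) : S != set0 -> acyclic S A -> gmax S A != set0.
Proof.
case/set0Pn=> x xS; apply: contraLR; rewrite !negbK => /eqP src0.
apply: (has_cycle_of_preds _ xS) => y yS.
have : y \notin gmax S A by rewrite src0 inE.
by rewrite inE yS => /forall_inPn[z zS]; rewrite negbK; exists z.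
Qed.

Lemma acyclic_set1 x : acyclic [set x] A.
Proof.
apply/negP=> /existsP[l /existsP[t /and4P[l2 ut tx _]]].
have : size t <= size [:: x].
  by apply: uniq_leq_size ut _ => z /(allP tx); rewrite !inE.
by rewrite size_tuple /=; case: (nat_of_ord l) l2 => [|[|]].
Qed.

Lemma gmax_set1 x : gmax [set x] A = [set x].
Proof.
apply/setP=> y; rewrite !inE andb_idr // => /eqP ->.
by apply/forall_inP=> z; rewrite inE => /eqP ->; rewrite A_irr.
Qed.

Lemma gcomponent_isolated x : x \in gisolated setT A -> gcomponent x = [set x].
Proof.
rewrite inE => /andP[_ /forall_inP iso_x]; apply/setP=> y; rewrite !inE.
apply/idP/eqP => [|->]; last exact: connect0.
case/connectP=> [[|z q]] //= /andP[xz _] _; exfalso.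
have zx : z != x by apply: contraTneq xz => ->; rewrite /uadj A_irr.
by move: (iso_x z (in_setT z)) xz; rewrite zx /uadj => /andP[/negbTE -> /negbTE ->].
Qed.

Lemma isolated_acyclic_component x :
  x \in gisolated setT A -> [set x] \in acyclic_components A.
Proof.
move=> iso_x; rewrite inE -(gcomponent_isolated iso_x).
by rewrite gcomponent_in_gcomponents (gcomponent_isolated iso_x) acyclic_set1.
Qed.

Lemma acyclic_components_sub : acyclic_components A \subset gcomponents A.
Proof. by apply/subsetP=> C; rewrite inE => /andP[]. Qed.

Lemma bigcup_gmax_acyclic_sub :
  \bigcup_(C in acyclic_components A) gmax C A
    \subset \bigcup_(C in gcomponents A) gmax C A.
Proof.
apply/bigcupsP=> C Cacyc; apply: (bigcup_sup C).
exact: subsetP acyclic_components_sub C Cacyc.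
Qed.

Lemma isolated_sub_bigcup_gmax_acyclic :
  gisolated setT A \subset \bigcup_(C in acyclic_components A) gmax C A.
Proof.
apply/subsetP=> x iso_x; apply/bigcupP; exists [set x].
  exact: isolated_acyclic_component.
by rewrite gmax_set1 set11.
Qed.

Lemma card_acyclic_components_le :
  #|acyclic_components A| <= \sum_(C in gcomponents A) #|gmax C A|.
Proof.
rewrite (bigID [in acyclic_components A]) /= -sum1_card.
apply: leq_trans (leq_addr _ _).
rewrite [leqRHS](eq_bigl [in acyclic_components A]) => [|C]; last first.
  by rewrite andb_idl // => /(subsetP acyclic_components_sub).
apply: leq_sum => C; rewrite inE => /andP[Ccomp Cacyc].
rewrite card_gt0 acyclic_gmax_neq0 //.
by case/gcomponentsP: Ccomp => x ->; apply/set0Pn; exists x; apply: gcomponent_refl.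
Qed.

Lemma card_isolated_le : #|gisolated setT A| <= #|acyclic_components A|.
Proof.
rewrite -(card_in_imset (f := set1)); last by move=> x y _ _ /set1_inj.
apply/subset_leq_card/subsetP=> _ /imsetP[x iso_x ->].
exact: isolated_acyclic_component.
Qed.

End Digraph.

Lemma maj_arc_irr n h (p : profile n h) mu : irreflexive (maj_arc p mu).
Proof. by move=> x; rewrite /maj_arc eqxx. Qed.

Lemma support_diag n h (p : profile n h) x : Defs.support p x x = 0.
Proof. by apply/eqP; rewrite cards_eq0; apply/eqP/setP=> i; rewrite !inE /above eqxx. Qed.

Lemma Dmu_gmax n h (p : profile n h) mu : 0 < mu -> Dmu p mu = gmax setT (maj_arc p mu).
Proof.
move=> mu_gt0; apply/setP=> x; rewrite !inE /=.
apply/forallP/forall_inP => [beaten y _ | src y].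
  by rewrite /maj_arc /mu_beats negb_and -ltnNge beaten orbT.
have [-> | yx] := eqVneq y x; first by rewrite (support_diag p x).
by move: (src y (in_setT y)); rewrite /maj_arc /mu_beats yx -ltnNge.
Qed.

Theorem proposition6 (n h mu : nat) (p : profile n h) :
  2 <= n -> 2 <= h -> h < 2 * mu -> mu <= h ->
  [/\ Dmu p mu = \bigcup_(C in gcomponents (maj_arc p mu)) gmax C (maj_arc p mu),
      \bigcup_(C in acyclic_components (maj_arc p mu)) gmax C (maj_arc p mu)
        \subset \bigcup_(C in gcomponents (maj_arc p mu)) gmax C (maj_arc p mu) &
      gisolated [set: 'I_n] (maj_arc p mu)
        \subset \bigcup_(C in acyclic_components (maj_arc p mu)) gmax C (maj_arc p mu)] /\
  [/\ #|Dmu p mu| = \sum_(C in gcomponents (maj_arc p mu)) #|gmax C (maj_arc p mu)|,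
      #|acyclic_components (maj_arc p mu)|
        <= \sum_(C in gcomponents (maj_arc p mu)) #|gmax C (maj_arc p mu)|
    & #|gisolated [set: 'I_n] (maj_arc p mu)| <= #|acyclic_components (maj_arc p mu)|].
Proof.
move=> _ _ h_lt_2mu _.
have irr := maj_arc_irr p mu.
rewrite Dmu_gmax; last by lia.
split; split.
- by rewrite bigcup_gmax_gcomponents.
- exact: bigcup_gmax_acyclic_sub.
- exact: isolated_sub_bigcup_gmax_acyclic irr.
- exact: card_gmax_gcomponents.
- exact: card_acyclic_components_le irr.
- exact: card_isolated_le irr.
Qed.
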